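(* Let $k=-\frac{n}{2}(n-2)$. The class $\delta^k\in E_*\langle\det\rangle$ is invariant under the (twisted) action of $F$.
   Context: Let $p$ be an odd prime and $n=p-1$. Let $E=E_n$ be Morava $E$--theory with $E_*=\mathbb{W}[\![u_1,\dots,u_{n-1}]\!][u^{\pm1}]$, $\mathbb{W}=W(\mathbb{F}_{p^n})$, associated to the Honda formal group law of height $n$, with its action of the Morava stabilizer group $\mathbb{G}_n=\mathbb{S}_n\rtimes\mathrm{Gal}(\mathbb{F}_{p^n}/\mathbb{F}_p)$ ($\mathbb{S}_n$ the automorphism group of the Honda formal group law over $\mathbb{F}_{p^n}$). Let $\det\colon\mathbb{G}_n\to\mathbb{Z}_p^\times$ be the determinant (reduced norm) homomorphism. $E_*\langle\det\rangle$ denotes $E_*$ with the twisted action $\widehat{g}(x)=g(x)\det(g)$. Let $\omega\in\mathbb{W}$ be a primitive $(p^n-1)$--st root of unity; identifying $\mathbb{W}^\times$ with a subgroup of $\mathbb{S}_n$, let $\tau=\omega^{(p^n-1)/n^2}\in\mathbb{S}_n$, and write $\eta=\omega^{(p^n-1)/n^2}$ when viewed as an element of $\mathbb{W}\subseteq E_0$; then $\det(\tau)=\eta^{(p^n-1)/n}$. $F=\langle\zeta,\tau\rangle\cong C_p\rtimes C_{n^2}$ is a maximal finite subgroup of $\mathbb{S}_n$ with $\zeta$ of order $p$, $\tau^{-1}\zeta\tau=\zeta^e$ for $e$ a generator of $(\mathbb{Z}/p)^\times$, and $\det(\zeta)=1$. The element $\delta\in E_{2p}$ is the unit, invariant under $C_p=\langle\zeta\rangle$,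 appearing in the Hopkins--Miller computation $\widehat{H}^*(C_p,E_* )\cong\mathbb{F}_{p^n}[a,b^{\pm1},\delta^{\pm1}]/(a^2)$; it satisfies $\tau(\delta)=\eta^{-p}\delta$. *)

From HB Require Import structures.
From mathcomp Require Import all_boot all_order all_algebra all_fingroup.
Set Implicit Arguments. Unset Strict Implicit. Unset Printing Implicit Defensive.
Import GRing.Theory.
Local Open Scope ring_scope.

Definition twisted_act (gT : finGroupType) (R : comUnitRingType)
  (act : gT -> R -> R) (det : gT -> R) (g : gT) (x : R) : R :=
  act g x * det g.

(* k = - n (n-2) / 2  (n = p-1 is even, so this is an integer). *)
Definition kexp (n : nat) : int := - ((n * (n - 2))%/ 2)%N%:Z.

(* The elements g of F whose determinant is an F-invariant unit and which fix
   x = delta^k under the twisted action form a set closed under products, so it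
   suffices to check the generators.  For zeta both factors are trivial.  Put
   eta = omega^((p^n-1)/n^2); then eta^(n^2) = 1, tau scales delta by eta^(-p),
   and det tau = eta^((p^n-1)/n), so tau fixes x iff
   n^2 | (p^n-1)/n + p n(n-2)/2.  Expanding p^n = (1+n)^n modulo n^3 gives
   (p^n-1)/n = n(1 + n(n-1)/2) mod n^2, and for n even the sum is indeed
   0 mod n^2. *)

From HB Require Import structures.
From mathcomp Require Import all_boot all_order all_algebra all_fingroup.
From mathcomp Require Import zify.
Import GRing.Theory.

Set Implicit Arguments.
Unset Strict Implicit.
Unset Printing Implicit Defensive.

Lemma expSn_expansion N a :
  exists t, N.+1 ^ a = 1 + a * N + 'C(a, 2) * N ^ 2 + N ^ 3 * t.
Proof.
elim: a => [|a [t IHa]]; first by exists 0; rewrite bin0n; lia.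
exists (t * N.+1 + 'C(a, 2)); rewrite expnS IHa binS bin1; nia.
Qed.

Lemma sqrn_dvd_expSn_pred N : N ^ 2 %| (N.+1 ^ N).-1.
Proof.
have [t ->] := expSn_expansion N N.
by apply/dvdnP; exists (1 + 'C(N, 2) + N * t); nia.
Qed.

Lemma sqrn_dvd_twisted_weight N : ~~ odd N ->
  N ^ 2 %| (N.+1 ^ N).-1 %/ N + N.+1 * (N * (N - 2) %/ 2).
Proof.
move=> evenN; have [t ->] := expSn_expansion N N.
have [m ->] : exists m, N = 2 * m.
  by exists N./2; rewrite mul2n -[LHS]odd_double_half (negbTE evenN).
have [-> | m_gt0] := posnP m; first by rewrite !muln0 dvdn0.
have -> : 'C(2 * m, 2) = m * (2 * m).-1 by rewrite bin2 -mulnA mul2n doubleK.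
have -> : 2 * m * (2 * m - 2) %/ 2 = m * (2 * m - 2) by rewrite -mulnA mulKn.
rewrite (_ : _.-1 = 2 * m * (2 * m * (1 + m * (2 * m).-1 + 2 * m * t))); last by nia.
by rewrite mulKn ?muln_gt0 //; apply/dvdnP; exists (2 * m - 1 + t); nia.
Qed.

Lemma gen_mul_ind {gT : finGroupType} (A : {set gT}) (P : gT -> Prop) :
  P 1%g -> (forall g h, P g -> P h -> P (g * h)%g) ->
  {in A, forall a, P a} -> {in <<A>>%g, forall g, P g}.
Proof.
move=> P1 PM PA g /gen_prodgP[n [c Ac ->]].
by elim/big_ind: _ => // i _; apply: PA.
Qed.

Local Open Scope ring_scope.

Lemma rmorph_eigen_powz (R : comUnitRingType) (f : {rmorphism R -> R}) (c d y : R) (k : int) :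
  c \is a GRing.unit -> y \is a GRing.unit -> f y = c * y -> c ^ k * d = 1 ->
  f (y ^ k) * d = y ^ k.
Proof.
move=> Uc Uy fy ckd.
by rewrite rmorphXz // fy exprMz_comm //; [rewrite mulrAC ckd mul1r | exact: mulrC].
Qed.

Section TwistedFixedPoints.

Variables (gT : finGroupType) (R : comUnitRingType) (G : {group gT}).
Variables (act : gT -> {rmorphism R -> R}) (det : gT -> R) (x : R).

Hypothesis act1 : forall y, act 1%g y = y.
Hypothesis actM : forall g h y, g \in G -> h \in G -> act (g * h)%g y = act g (act h y).
Hypothesis detM : forall g h, g \in G -> h \in G -> det (g * h)%g = det g * det h.
Hypothesis det1 : det 1%g = 1.

Let twisted_stab g := [/\ g \in G, det g \is a GRing.unit,
  {in G, forall h, act h (det g) = det g} &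
  twisted_act (fun g y => act g y) det g x = x].

Let twisted_stab1 : twisted_stab 1%g.
Proof.
split; rewrite ?group1 ?det1 ?unitr1 //; last by rewrite /twisted_act act1 det1 mulr1.
by move=> h _; rewrite rmorph1.
Qed.

Let twisted_stabM g h : twisted_stab g -> twisted_stab h -> twisted_stab (g * h)%g.
Proof.
move=> [Gg Ug detg_fix fix_g] [Gh Uh deth_fix fix_h].
split; rewrite ?groupM ?detM ?unitrM ?Ug //.
  by move=> k Gk; rewrite rmorphM /= detg_fix ?deth_fix.
rewrite /twisted_act /= in fix_g fix_h *.
have act_h : act h x = x / det h by rewrite -[in RHS]fix_h mulrK.
rewrite actM // act_h rmorphM rmorphV //= deth_fix // detM //.
by rewrite [det g * _]mulrC mulrA divrK.
Qed.

Lemma twisted_fixed_gen (A : {set gT}) : G :=: <<A>>%g ->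
  {in A, forall a, [/\ det a \is a GRing.unit,
     {in G, forall h, act h (det a) = det a} &
     twisted_act (fun g y => act g y) det a x = x]} ->
  {in G, forall g, twisted_act (fun g y => act g y) det g x = x}.
Proof.
move=> defG fixA g Gg; suff [] : twisted_stab g by [].
move: g Gg; rewrite defG; apply: gen_mul_ind twisted_stab1 twisted_stabM _ => a Aa.
by have [] := fixA a Aa; split; rewrite // defG mem_gen.
Qed.

End TwistedFixedPoints.

Theorem lemma4p15
  (p : nat) (Hp : prime p) (Hodd : odd p)
  (R : comUnitRingType)                 (* E_* (grading forgotten) *)
  (gT : finGroupType) (F : {group gT}) (zeta tau : gT) (e : nat)
  (act : gT -> {rmorphism R -> R})      (* action of F on E_* by ring automorphisms *)
  (det : gT -> R)                       (* determinant, viewed in E_0 *)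
  (omega delta : R)
  (HF : F :=: <<[set zeta; tau]>>%g)
  (Hzeta_ord : #[zeta]%g = p) (Htau_ord : #[tau]%g = ((p.-1) ^ 2)%N)
  (He_cop : coprime e p)
  (He_gen : forall m : nat, (0 < m < p.-1)%N -> (e ^ m %% p != 1)%N)
  (Hconj : (zeta ^ tau = zeta ^+ e)%g)
  (Hact1 : forall x, act 1%g x = x)
  (HactM : forall g h x, g \in F -> h \in F -> act (g * h)%g x = act g (act h x))
  (Homega : ((p ^ p.-1).-1).-primitive_root omega)
  (Hact_omega : forall g, g \in F -> act g omega = omega)   (* F acts W-linearly *)
  (HdetM : forall g h, g \in F -> h \in F -> det (g * h)%g = det g * det h)
  (Hdet_zeta : det zeta = 1)
  (Hdet_tau : det tau =
     (omega ^+ (((p ^ p.-1).-1) %/ (p.-1 ^ 2))) ^+ (((p ^ p.-1).-1) %/ p.-1))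
  (Hdelta_unit : delta \is a GRing.unit)
  (Hdelta_zeta : act zeta delta = delta)
  (Hdelta_tau : act tau delta =
     (omega ^+ (((p ^ p.-1).-1) %/ (p.-1 ^ 2))) ^- p * delta) :
  forall g, g \in F ->
    twisted_act (fun g x => act g x) det g (delta ^ kexp p.-1) = delta ^ kexp p.-1.
Proof.
set N := p.-1 in Homega Hdet_tau Hdelta_tau *.
set q := (p ^ N).-1 in Homega Hdet_tau Hdelta_tau.
set eta := omega ^+ (q %/ N ^ 2) in Hdet_tau Hdelta_tau.
have pE : p = N.+1 by rewrite prednK ?prime_gt0.
have N_gt0 : (0 < N)%N by rewrite -ltnS -pE prime_gt1.
have evenN : ~~ odd N by rewrite pE /= in Hodd.
have zetaF : zeta \in F by rewrite HF mem_gen ?set21.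
have det1 : det 1%g = 1.
  by have := HdetM _ _ zetaF (group1 F); rewrite mulg1 Hdet_zeta mul1r => <-.
have eta_order : eta ^+ (N ^ 2) = 1.
  by rewrite prim_expr_order // dvdn_prim_root // /q pE sqrn_dvd_expSn_pred.
have Ueta : eta \is a GRing.unit.
  by apply/unitrPr; exists (eta ^+ (N ^ 2).-1); rewrite -exprS prednK ?expn_gt0 ?N_gt0.
have eta_fixed : {in F, forall g, act g eta = eta}.
  by move=> g Fg; rewrite rmorphXn /= Hact_omega.
have tau_weight : (eta ^- p) ^ kexp N * eta ^+ (q %/ N) = 1.
  rewrite /kexp -exprz_inv invrK -exprnP -exprM -exprD; apply: expr_dvd eta_order _.
  by rewrite addnC /q pE sqrn_dvd_twisted_weight.
apply: (twisted_fixed_gen Hact1 HactM HdetM det1 HF) => a /set2P[-> | ->].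
  rewrite /twisted_act /= Hdet_zeta; split=> [|h _|]; rewrite ?unitr1 ?rmorph1 //.
  by apply: (rmorph_eigen_powz (c := 1)); rewrite ?unitr1 ?exp1rz ?mul1r.
rewrite /twisted_act /= Hdet_tau; split; first exact: unitrX.
  by move=> h Fh; rewrite rmorphXn /= eta_fixed.
apply: (rmorph_eigen_powz (c := eta ^- p)) => //.
by rewrite unitrV unitrX.
Qed.
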